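(* Let $\tilde{\mathbf{G}}$ and $\tilde{\mathbf{G}}_0$ be two degree $n$ covers of the same quasisplit reductive group $\mathbf{G}$ over $S$ (with fixed Borel subgroup and maximally split maximal torus $\mathbf{B}\supset\mathbf{T}$), with first Brylinski–Deligne invariants $Q$ and $Q_0$ on the cocharacter lattice $\mathcal{Y}$. If $Q(y)-Q_0(y)\in n\mathbb{Z}$ for all $y\in\mathcal{Y}$, then the modified dual root data coincide, $\tilde\Psi^\vee=\tilde\Psi_0^\vee$ (in particular $\mathcal{Y}_{Q,n}=\mathcal{Y}_{Q_0,n}$, $\mathcal{X}_{Q,n}=\mathcal{X}_{Q_0,n}$, and the modified roots and coroots agree), and hence the dual groups are equal: $\tilde G^\vee=\tilde G_0^\vee$.
   Context: $S$ is $\operatorname{Spec}$ of a field or of a DVR (containing a field or with finite residue field). Let $\mathcal{X},\mathcal{Y}$ be the character and cocharacter lattices of $\mathbf{T}$ (local systems on $S_{\mathrm{et}}$), $\Phi,\Phi^\vee$ roots and coroots, $\Delta,\Delta^\vee$ simple roots/coroots for $\mathbf{B}$. For a Weyl-invariant quadratic form $Q:\mathcal{Y}\to\mathbb{Z}$ set $\beta_Q(y_1,y_2)=n^{-1}(Q(y_1+y_2)-Q(y_1)-Q(y_2))$, $\mathcal{Y}_{Q,n}=\{y\in\mathcal{Y}:\beta_Q(y,y')\in\mathbb{Z}\ \forall y'\}$, $\mathcal{X}_{Q,n}=\{x\in n^{-1}\mathcal{X}:\langle x,y\rangle\in\mathbb{Z}\ \forall y\in\mathcal{Y}_{Q,n}\}$.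 For $\phi\in\Phi$ put $n_\phi=n/\gcd(n,Q(\phi^\vee))$, $\tilde\phi=n_\phi^{-1}\phi$, $\tilde\phi^\vee=n_\phi\phi^\vee$, giving sets $\tilde\Phi,\tilde\Phi^\vee,\tilde\Delta,\tilde\Delta^\vee$. The modified dual root datum is $\tilde\Psi^\vee=(\mathcal{Y}_{Q,n},\tilde\Phi^\vee,\tilde\Delta^\vee,\mathcal{X}_{Q,n},\tilde\Phi,\tilde\Delta)$, and the dual group $\tilde G^\vee$ of the cover is the local system on $S_{\mathrm{et}}$ of pinned reductive groups over $\mathbb{Z}$ with this based root datum (character lattice $\mathcal{Y}_{Q,n}$, roots $\tilde\Phi^\vee$). *)

From HB Require Import structures.
From mathcomp Require Import all_boot all_order all_algebra.
Set Implicit Arguments. Unset Strict Implicit. Unset Printing Implicit Defensive.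
Import Order.TTheory GRing.Theory Num.Theory.
Local Open Scope ring_scope.

(* Cocharacter lattice Y = Z^r ('rV[int]_r), character lattice X = Z^r,
   with the perfect pairing <x,y> = sum_i x_i y_i.  Elements of n^{-1}X are
   modelled inside 'rV[rat]_r. *)
Definition pairZ (r : nat) (x y : 'rV[int]_r) : int := \sum_(i < r) x 0 i * y 0 i.
Definition pairQ (r : nat) (x : 'rV[rat]_r) (y : 'rV[int]_r) : rat :=
  \sum_(i < r) x 0 i * (y 0 i)%:~R.
Definition toQ (r : nat) (x : 'rV[int]_r) : 'rV[rat]_r := map_mx (fun k : int => k%:~R) x.

Definition is_root_datum (r : nat) (rts : seq ('rV[int]_r * 'rV[int]_r)) : Prop :=
  uniq rts /\
  forall a, a \in rts ->
    pairZ a.1 a.2 = 2 /\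
    forall b, b \in rts ->
      (b.1 - pairZ b.1 a.2 *: a.1, b.2 - pairZ a.1 b.2 *: a.2) \in rts.

Definition is_base (r : nat) (rts simple : seq ('rV[int]_r * 'rV[int]_r)) : Prop :=
  uniq simple /\ {subset simple <= rts} /\
  (forall c : 'I_(size simple) -> int,
      \sum_(i < size simple) c i *: (nth (0, 0) simple i).1 = 0 -> forall i, c i = 0) /\
  (forall a, a \in rts -> exists c : 'I_(size simple) -> int,
      a.1 = \sum_(i < size simple) c i *: (nth (0, 0) simple i).1 /\
      ((forall i, 0 <= c i) \/ (forall i, c i <= 0))).

Definition betaQ (r n : nat) (Q : 'rV[int]_r -> int) (y1 y2 : 'rV[int]_r) : rat :=
  (Q (y1 + y2) - Q y1 - Q y2)%:~R / n%:R.

Definition is_quadratic_form (r : nat) (Q : 'rV[int]_r -> int) : Prop :=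
  (forall (k : int) y, Q (k *: y) = k ^+ 2 * Q y) /\
  (forall y1 y2 y3, Q (y1 + y2 + y3) - Q (y1 + y2) - Q y3
       = (Q (y1 + y3) - Q y1 - Q y3) + (Q (y2 + y3) - Q y2 - Q y3)).

Definition weyl_invariant (r : nat) (rts : seq ('rV[int]_r * 'rV[int]_r))
    (Q : 'rV[int]_r -> int) : Prop :=
  forall a, a \in rts -> forall y, Q (y - pairZ a.1 y *: a.2) = Q y.

Definition YQn (r n : nat) (Q : 'rV[int]_r -> int) (y : 'rV[int]_r) : Prop :=
  forall y', betaQ n Q y y' \is a Num.int.

Definition XQn (r n : nat) (Q : 'rV[int]_r -> int) (x : 'rV[rat]_r) : Prop :=
  (exists x0 : 'rV[int]_r, x = (n%:R)^-1 *: toQ x0) /\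
  forall y, YQn n Q y -> pairQ x y \is a Num.int.

Definition nphi (r n : nat) (Q : 'rV[int]_r -> int) (a : 'rV[int]_r * 'rV[int]_r) : nat :=
  n %/ gcdn n `|Q a.2|%N.

Definition mod_root (r n : nat) (Q : 'rV[int]_r -> int) (a : 'rV[int]_r * 'rV[int]_r)
  : 'rV[rat]_r := ((nphi n Q a)%:R)^-1 *: toQ a.1.
Definition mod_coroot (r n : nat) (Q : 'rV[int]_r -> int) (a : 'rV[int]_r * 'rV[int]_r)
  : 'rV[int]_r := (nphi n Q a)%:Z *: a.2.

(* the modified dual based root datum
   (Y_{Q,n}, ~Phi^vee, ~Delta^vee, X_{Q,n}, ~Phi, ~Delta) *)
Record based_datum (r : nat) := BasedDatum {
  bd_X : 'rV[int]_r -> Prop;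
  bd_roots : seq 'rV[int]_r;
  bd_simple_roots : seq 'rV[int]_r;
  bd_Y : 'rV[rat]_r -> Prop;
  bd_coroots : seq 'rV[rat]_r;
  bd_simple_coroots : seq 'rV[rat]_r }.

Definition modified_dual (r n : nat) (Q : 'rV[int]_r -> int)
    (rts simple : seq ('rV[int]_r * 'rV[int]_r)) : based_datum r :=
  BasedDatum (YQn n Q) (map (mod_coroot n Q) rts) (map (mod_coroot n Q) simple)
             (XQn n Q) (map (mod_root n Q) rts) (map (mod_root n Q) simple).

(** Everything in the modified dual root datum depends on Q only through
    Q mod n: the form beta_Q is Q(y1+y2) - Q(y1) - Q(y2) divided by n, so
    shifting Q by n times an integer-valued function shifts beta_Q by an
    integer and leaves Y_{Q,n} (hence also X_{Q,n}) unchanged; and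
    n_phi = n / gcd(n, Q(phi^vee)) only sees Q(phi^vee) mod n. *)

From mathcomp Require Import all_boot all_order all_algebra.
From mathcomp Require Import ring.
From Stdlib Require Import FunctionalExtensionality PropExtensionality.
Import GRing.Theory Num.Theory.
Local Open Scope ring_scope.

Lemma gcdz_eqmodr {d a b : int} : (d %| a - b)%Z -> gcdz d a = gcdz d b.
Proof. by move=> dvd_ab; rewrite -(subrK b a) -(divzK dvd_ab) gcdzMDl. Qed.

Lemma betaQ_shift {r n : nat} {Q Q0 D : 'rV[int]_r -> int} :
    n != 0%N -> (forall y, Q y = Q0 y + D y * n%:Z) ->
  forall y y', betaQ n Q y y' - betaQ n Q0 y y' = (D (y + y') - D y - D y')%:~R.
Proof.
move=> n_neq0 QE y y'; rewrite /betaQ !QE.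
have nQ_neq0 : (n%:R : rat) != 0 by rewrite pnatr_eq0.
rewrite !(intrD, intrB, intrM) -!pmulrn.
by field.
Qed.

Section CongruentForms.

Context {r n : nat} {Q Q0 : 'rV[int]_r -> int}.
Hypothesis n_gt0 : (0 < n)%N.
Hypothesis n_dvd_QQ0 : forall y, (n%:Z %| Q y - Q0 y)%Z.

Lemma betaQ_int_congr y y' :
  (betaQ n Q y y' \is a Num.int) = (betaQ n Q0 y y' \is a Num.int).
Proof.
have QE v : Q v = Q0 v + ((Q v - Q0 v) %/ n%:Z)%Z * n%:Z.
  by rewrite divzK // addrC subrK.
rewrite -[betaQ n Q y y'](subrK (betaQ n Q0 y y')).
by rewrite (betaQ_shift (lt0n_neq0 n_gt0) QE) rpredDl // intr_int.
Qed.

Lemma YQn_congr : YQn n Q = YQn n Q0.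
Proof.
apply: functional_extensionality => y; apply: propositional_extensionality.
by split=> intY y'; [rewrite -betaQ_int_congr | rewrite betaQ_int_congr].
Qed.

Lemma XQn_congr : XQn n Q = XQn n Q0.
Proof. by rewrite /XQn YQn_congr. Qed.

Lemma nphi_congr : nphi n Q = nphi n Q0.
Proof.
apply: functional_extensionality => a; rewrite /nphi.
by have [->] := gcdz_eqmodr (n_dvd_QQ0 a.2).
Qed.

End CongruentForms.

Theorem mainTheorem3 (r n : nat) (rts simple : seq ('rV[int]_r * 'rV[int]_r))
    (Q Q0 : 'rV[int]_r -> int) :
  (0 < n)%N ->
  is_root_datum rts -> is_base rts simple ->
  is_quadratic_form Q -> weyl_invariant rts Q ->
  is_quadratic_form Q0 -> weyl_invariant rts Q0 ->
  (forall y, (n%:Z %| Q y - Q0 y)%Z) ->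
  modified_dual n Q rts simple = modified_dual n Q0 rts simple.
Proof.
move=> n_gt0 _ _ _ _ _ _ n_dvd_QQ0.
have YQnE := YQn_congr n_gt0 n_dvd_QQ0.
have XQnE := XQn_congr n_gt0 n_dvd_QQ0.
have nphiE := nphi_congr n_dvd_QQ0.
by rewrite /modified_dual /mod_coroot /mod_root YQnE XQnE nphiE.
Qed.
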